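(* Let $\mathcal{C}=\langle E,X\rangle$ be a stable configuration structure and $x^\dagger\in X$ a finite configuration. Define $\pi_{x^\dagger}:\mathsf{Pr}(\mathcal{C})\to\{-1,1\}$ by $\pi_{x^\dagger}(p)=-1$ if $p\subseteq x^\dagger$ and $\pi_{x^\dagger}(p)=1$ otherwise. Then $\mathsf{E}(\mathcal{C})[\pi_{x^\dagger}]$ is a polarized event structure.
   Context: A configuration structure is $\mathcal{C}=\langle E,X\rangle$ with $E$ countable and $X\subseteq\mathcal{P}(E)$. It is stable if: $\emptyset\in X$; for all nonempty $x\in X$ there is $a\in x$ with $x\setminus\{a\}\in X$; for all $x,y,z\in X$, $x\cup y\subseteq z$ implies $x\cup y\in X$; $X$ is closed under binary intersection; and for all $x,y,z\in X$, if each of $x\cup y$, $y\cup z$, $x\cup z$ is contained in some element of $X$ then $x\cup y\cup z\in X$. Two configurations $x,y$ are compatible ($x\frown_{\mathcal{C}}y$) if $\{x,y\}$ has a least upper bound in the poset $(X,\subseteq)$. In $(X,\subseteq)$, a set $Y\subseteq X$ is pairwise consistent if $Y\neq\emptyset$ and every two distinct elements of $Y$ have a least upper bound in $(X,\subseteq)$; an element $p\in X$ is a complete prime if for every pairwise consistent $Y$ whose least upper bound $\bigsqcup Y$ exists in $(X,\subseteq)$ and satisfies $p\subseteq\bigsqcup Y$, there is $y\in Y$ with $p\subseteq y$. $\mathsf{Pr}(\mathcal{C})$ is the set of complete primes. A prime event structure is $\mathbb{E}=(E,<,\#)$ with $<$ a partial order (reflexive, antisymmetric, transitive), $\#$ an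 irreflexive symmetric relation, such that $e\#e'<e''$ implies $e\#e''$; its configurations $\mathit{Conf}(\mathbb{E})$ are the subsets of $E$ that are conflict-free and downward closed for $<$. Winskel's construction: $\mathsf{E}(\mathcal{C}):=(\mathsf{Pr}(\mathcal{C}),<,\#)$ with $p<q$ iff $p\subseteq q$ and $p\#q$ iff not $p\frown_{\mathcal{C}}q$ (this is a prime event structure). A polarized event structure $\mathbb{E}[\pi]$ is a prime event structure $\mathbb{E}=(E,<,\#)$ with a map $\pi:E\to\{-1,1\}$ such that $\{e\in E\mid\pi(e)<0\}\in\mathit{Conf}(\mathbb{E})$. *)

From mathcomp Require Import all_boot all_algebra.
From mathcomp Require Import boolp classical_sets cardinality.
Set Implicit Arguments. Unset Strict Implicit. Unset Printing Implicit Defensive.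
Import GRing.Theory Num.Theory.
Local Open Scope classical_set_scope.
Local Open Scope ring_scope.

Section ConfStruct.
Variable E : countType.
Variable X : set (set E).

Definition stable : Prop :=
  [/\ X set0,
      (forall x, X x -> x !=set0 -> exists2 a, x a & X (x `\ a)),
      (forall x y z, X x -> X y -> X z -> x `|` y `<=` z -> X (x `|` y)),
      (forall x y, X x -> X y -> X (x `&` y)) &
      (forall x y z, X x -> X y -> X z ->
         (exists2 w, X w & x `|` y `<=` w) ->
         (exists2 w, X w & y `|` z `<=` w) ->
         (exists2 w, X w & x `|` z `<=` w) -> X (x `|` y `|` z))].

Definition is_lub (Y : set (set E)) (z : set E) : Prop :=
  [/\ X z, (forall y, Y y -> y `<=` z) &
      (forall w, X w -> (forall y, Y y -> y `<=` w) -> z `<=` w)].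

Definition compatible (x y : set E) : Prop := exists z, is_lub [set x; y] z.

Definition pairwise_consistent (Y : set (set E)) : Prop :=
  [/\ Y `<=` X, Y !=set0 &
      (forall x y, Y x -> Y y -> x <> y -> compatible x y)].

Definition complete_prime (p : set E) : Prop :=
  X p /\
  forall Y, pairwise_consistent Y ->
    forall z, is_lub Y z -> p `<=` z -> exists2 y, Y y & p `<=` y.

Definition Pr : set (set E) := complete_prime.

(* Winskel's E(C): events Pr(C), order ⊆, conflict = incompatibility *)
Definition EC_le (p q : set E) : Prop := p `<=` q.
Definition EC_conf (p q : set E) : Prop := ~ compatible p q.

End ConfStruct.

Definition prime_event_structure (T : Type) (D : set T)
    (le cf : T -> T -> Prop) : Prop :=
  [/\ (forall e, D e -> le e e),
      (forall e e', D e -> D e' -> le e e' -> le e' e -> e = e'),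
      (forall e e' e'', D e -> D e' -> D e'' -> le e e' -> le e' e'' -> le e e'') &
   [/\ (forall e, D e -> ~ cf e e),
      (forall e e', D e -> D e' -> cf e e' -> cf e' e) &
      (forall e e' e'', D e -> D e' -> D e'' -> cf e e' -> le e' e'' -> cf e e'')]].

Definition Conf (T : Type) (D : set T) (le cf : T -> T -> Prop) : set (set T) :=
  [set c | [/\ c `<=` D,
               (forall e e', c e -> c e' -> ~ cf e e') &
               (forall e e', c e -> D e' -> le e' e -> c e')]].

Definition polarized_event_structure (T : Type) (D : set T)
    (le cf : T -> T -> Prop) (pi : T -> int) : Prop :=
  [/\ prime_event_structure D le cf,
      (forall e, D e -> pi e = -1 \/ pi e = 1) &
      Conf D le cf [set e | D e /\ pi e < 0]].

Definition pol_of (E : Type) (xd : set E) (p : set E) : int :=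
  if `[< p `<=` xd >] then -1 else 1.

From mathcomp Require Import all_boot all_algebra.
From mathcomp Require Import boolp classical_sets cardinality.
Local Open Scope classical_set_scope.

(** In a stable configuration structure two configurations bounded above by a
    configuration are compatible, [x `|` y] being their least upper bound; so
    compatibility is just boundedness in [X].  Conflict, i.e. unboundedness,
    is then irreflexive, symmetric and inherited upwards, and the complete
    primes below [x†] are pairwise compatible because [x†] bounds them. *)

Section Compatibility.
Context {E : countType} {X : set (set E)}.
Hypothesis unionX : forall x y z, X x -> X y -> X z ->
  x `|` y `<=` z -> X (x `|` y).

Lemma is_lub_setU {x y z : set E} : X x -> X y -> X z ->
  x `|` y `<=` z -> is_lub X [set x; y] (x `|` y).
Proof.
move=> Xx Xy Xz xyz; split; first exact: unionX xyz.
- by move=> w [->|->] a wa; [left|right].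
- by move=> w _ ub a [xa|ya]; [apply: (ub x) | apply: (ub y)] => //; [left|right].
Qed.

Lemma compatible_bounded {x y z : set E} : X x -> X y -> X z ->
  x `|` y `<=` z -> compatible X x y.
Proof. by move=> Xx Xy Xz xyz; exists (x `|` y); apply: is_lub_setU xyz. Qed.

Lemma compatible_refl (x : set E) : X x -> compatible X x x.
Proof. by move=> Xx; apply: (compatible_bounded Xx Xx Xx); rewrite setUid. Qed.

Lemma compatible_sym (x y : set E) : X x -> X y ->
  compatible X x y -> compatible X y x.
Proof.
move=> Xx Xy [z [Xz ub _]]; apply: (compatible_bounded Xy Xx Xz).
by move=> a [ya|xa]; [apply: (ub y) => //; right | apply: (ub x) => //; left].
Qed.

Lemma compatible_le {x y y' : set E} : X x -> X y -> y `<=` y' ->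
  compatible X x y' -> compatible X x y.
Proof.
move=> Xx Xy yy' [z [Xz ub _]]; apply: (compatible_bounded Xx Xy Xz).
by move=> a [xa|/yy' y'a]; [apply: (ub x) => //; left | apply: (ub y') => //; right].
Qed.

Lemma prime_event_structure_sub {D : set (set E)} : D `<=` X ->
  prime_event_structure D (@EC_le E) (EC_conf X).
Proof.
move=> DX; split; last split.
- by move=> p _.
- by move=> p q _ _ pq qp; rewrite eqEsubset.
- by move=> p q r _ _ _ pq qr a /pq /qr.
- by move=> p /DX Xp; apply; apply: compatible_refl.
- by move=> p q /DX Xp /DX Xq pq qp; apply: pq; apply: compatible_sym.
- by move=> p q r /DX Xp /DX Xq _ pq qr pr; apply: pq; apply: compatible_le pr.
Qed.

Lemma Conf_below {D : set (set E)} {xd : set E} : D `<=` X -> X xd ->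
  Conf D (@EC_le E) (EC_conf X) [set p | D p /\ p `<=` xd].
Proof.
move=> DX Xxd; split.
- by move=> p [].
- move=> p q [/DX Xp pxd] [/DX Xq qxd]; apply.
  by apply: (compatible_bounded Xp Xq Xxd) => a [/pxd|/qxd].
- by move=> p q [_ pxd] Dq qp; split=> // a /qp /pxd.
Qed.

End Compatibility.

Lemma Pr_sub (E : countType) (X : set (set E)) : Pr X `<=` X.
Proof. by move=> p []. Qed.

Lemma pol_of_lt0 (E : Type) (xd p : set E) : (pol_of xd p < 0)%R <-> p `<=` xd.
Proof. by rewrite /pol_of; case: asboolP. Qed.

Lemma pol_of_sign (E : Type) (xd p : set E) :
  pol_of xd p = (-1)%R \/ pol_of xd p = 1%R.
Proof. by rewrite /pol_of; case: asboolP; [left|right]. Qed.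

Theorem mainTheorem6 (E : countType) (X : set (set E)) (xd : set E) :
  stable X -> X xd -> finite_set xd ->
  polarized_event_structure (Pr X) (@EC_le E) (EC_conf X) (pol_of xd).
Proof.
move=> [_ _ unionX _ _] Xxd _; split.
- exact: (prime_event_structure_sub unionX (@Pr_sub E X)).
- by move=> p _; apply: pol_of_sign.
- have -> : [set p | Pr X p /\ (pol_of xd p < 0)%R] = [set p | Pr X p /\ p `<=` xd].
    by apply/seteqP; split=> p [Pp /pol_of_lt0].
  exact: (Conf_below unionX (@Pr_sub E X) Xxd).
Qed.
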